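(* Let $G$ be as in the context and assume $G\in\mathcal{RH}_\infty$. Let $K$ be a proper real rational transfer matrix (mapping $y$ to $u$). Then $K$ is a retrofit controller if and only if there exists $Q\in\mathcal{RH}_\infty$ such that $$K=(I+QG_{yu})^{-1}Q \qquad\text{and}\qquad G_{wu}\,Q\,G_{yv}=0 .$$ (Here $Q$ is the Youla parameter of $K$, namely $Q=K(I-G_{yu}K)^{-1}$.)
   Context: A subsystem is a proper real rational transfer matrix $G$ with inputs $(v,d,u)$ (interaction input, disturbance input, control input) and outputs $(w,z,y)$ (interaction output, evaluation output, measurement output): $$\begin{bmatrix} w\\ z\\ y\end{bmatrix}=\begin{bmatrix} G_{wv}&G_{wd}&G_{wu}\\ G_{zv}&G_{zd}&G_{zu}\\ G_{yv}&G_{yd}&G_{yu}\end{bmatrix}\begin{bmatrix} v\\ d\\ u\end{bmatrix}.$$ An environment is a proper real rational transfer matrix $\overline{G}$ closing the interaction loop by $v=\overline{G}w$; a (sub)controller is a proper real rational $K$ closing $u=Ky$. $\mathcal{RH}_\infty$ is the set of stable, proper, real rational transfer matrices. All feedback interconnections are assumed well-posed, and internal stability is meant in the standard sense (all closed-loop maps from signals injected at every interconnection point to all interconnection signals belong to $\mathcal{RH}_\infty$). For transfer matrices $H$ and $C$, the positive feedback system $y=Hu$, $u=Cy$ is denoted $\mathcal F(H,C)$, and $C$ is called a stabilizing controller for $H$ if $\mathcal F(H,C)$ is internally stable. The preexisting system is $G_{\rm pre}:=\mathcal F(\overline{G},G_{wv})$, i.e. the loop $w=G_{wv}v$, $v=\overline{G}w$.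 The set of admissible environments is $\overline{\mathcal G}:=\{\overline{G}: G_{\rm pre}\text{ is internally stable}\}$. A controller $u=Ky$ is a retrofit controller if the entire feedback system formed by $G$, $u=Ky$ and $v=\overline{G}w$ is internally stable for every $\overline{G}\in\overline{\mathcal G}$. *)

From HB Require Import structures.
From mathcomp Require Import all_boot all_order all_algebra.
From mathcomp Require Import fraction.
Set Implicit Arguments. Unset Strict Implicit. Unset Printing Implicit Defensive.
Import Order.TTheory GRing.Theory Num.Theory.
Local Open Scope ring_scope.

(* Scalar transfer functions: rational functions in s, i.e. elements of the
   fraction field of C[s], where C is a numeric algebraically closed field
   (playing the role of the complex numbers). *)
Definition tf (C : numClosedFieldType) := {fraction {poly C}}.

Definition real_poly (C : numClosedFieldType) (p : {poly C}) : Prop :=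
  p \is a polyOver Num.real.

Definition proper_real_rational (C : numClosedFieldType) (f : tf C) : Prop :=
  exists p q : {poly C},
    [/\ q != 0, real_poly p, real_poly q, (size p <= size q)%N
      & f = (tofrac p) / (tofrac q)].

Definition stable_tf (C : numClosedFieldType) (f : tf C) : Prop :=
  exists p q : {poly C},
    [/\ q != 0, real_poly p, real_poly q, (size p <= size q)%N
      & f = (tofrac p) / (tofrac q)] /\
    (forall z : C, root q z -> 'Re z < 0).

Definition prr_mx (C : numClosedFieldType) (m n : nat) (M : 'M[tf C]_(m, n)) :=
  forall i j, proper_real_rational (M i j).

Definition RHinf (C : numClosedFieldType) (m n : nat) (M : 'M[tf C]_(m, n)) :=
  forall i j, stable_tf (M i j).

(* Internal stability of the positive feedback system F(H, Ct):
   y = H u + e1, u = Ct y + e2.  The closed-loop map (e1,e2) |-> (y,u) is the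
   inverse of [[I, -H]; [-Ct, I]]; internal stability = well-posedness
   (invertibility) and all entries of this inverse in RH_infinity. *)
Definition int_stable (C : numClosedFieldType) (p m : nat)
  (H : 'M[tf C]_(p, m)) (Ct : 'M[tf C]_(m, p)) : Prop :=
  let A : 'M[tf C]_(p + m) := block_mx 1%:M (- H) (- Ct) 1%:M in
  A \in unitmx /\ RHinf (invmx A).

(* Retrofit controller: K such that for every proper real rational environment
   Gbar for which G_pre = F(Gbar, Gwv) is internally stable, the whole system
   (interconnection (v,u) -> (w,y) of G closed by v = Gbar w, u = K y) is
   internally stable. *)
Definition retrofit (C : numClosedFieldType) (nv nw nu ny : nat)
  (Gwv : 'M[tf C]_(nw, nv)) (Gwu : 'M[tf C]_(nw, nu))
  (Gyv : 'M[tf C]_(ny, nv)) (Gyu : 'M[tf C]_(ny, nu))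
  (K : 'M[tf C]_(nu, ny)) : Prop :=
  forall Gbar : 'M[tf C]_(nv, nw),
    prr_mx Gbar -> int_stable Gbar Gwv ->
    int_stable (block_mx Gwv Gwu Gyv Gyu) (block_mx Gbar 0 0 K).

From HB Require Import structures.
From mathcomp Require Import all_boot all_order all_algebra.
From mathcomp Require Import fraction.
From mathcomp Require Import ring.
Import Order.TTheory GRing.Theory Num.Theory.
Local Open Scope ring_scope.

(* For the loop F(H, Ct) let A = [[I, -H]; [-Ct, I]].  With the lower-left
   parameter X = Ct (I - H Ct)^-1, i.e. X = Ct + X H Ct, the closed-loop map
   [[I + H X, H + H X H]; [X, I + X H]] is an inverse of A, and similarly for the
   upper-right parameter Y = H (I - Ct H)^-1; conversely the off-diagonal blocks
   of A^-1 satisfy these fixpoint equations.  As RH_inf is closed under the ring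
   operations, internal stability reduces to the stability of one parameter.

   Sufficiency: for an admissible environment with parameter
   Qb = Gbar (I - Gwv Gbar)^-1 the closed-loop parameter of the whole system is
   written down from Qb and Q; G_wu Q G_yv = 0 makes it a fixpoint.
   Necessity: the trivial environment Gbar = 0 yields the Youla parameter Q of
   K.  If an entry m of G_wu Q G_yv were nonzero, the rank-one environment
   g e_(j,i), with g = h / (1 + h G_wv(i,j)) and h = c / (s + 1), is admissible,
   while the whole loop forces x (1 - h m) = h for a stable x; choosing the real
   gain c with h m = 1 at a real point s0 > 0 contradicts the stability of x. *)

Section FeedbackAlgebra.
Context {R : comUnitRingType}.

Lemma invmx_of_rinv {n} {A B : 'M[R]_n} : A *m B = 1%:M -> invmx A = B.
Proof.
move=> e; have [uA _] := mulmx1_unit e.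
by rewrite -{1}(mulKmx uA B) e mulmx1.
Qed.

Lemma invmx_of_linv {n} {A B : 'M[R]_n} : B *m A = 1%:M -> invmx A = B.
Proof.
move=> e; have [_ uA] := mulmx1_unit e.
by rewrite -{1}(mulmxK uA B) e mul1mx.
Qed.

Section Loop.
Context {p q : nat}.
Implicit Types (H : 'M[R]_(p, q)) (Ct : 'M[R]_(q, p)).

Definition feedback_mx H Ct : 'M[R]_(p + q) := block_mx 1%:M (- H) (- Ct) 1%:M.

(* Closed-loop map in terms of the lower-left parameter X = Ct (I - H Ct)^-1. *)
Definition closed_loop_dl H (X : 'M[R]_(q, p)) : 'M[R]_(p + q) :=
  block_mx (1%:M + H *m X) (H + H *m X *m H) X (1%:M + X *m H).

(* Closed-loop map in terms of the upper-right parameter Y = H (I - Ct H)^-1. *)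
Definition closed_loop_ur Ct (Y : 'M[R]_(p, q)) : 'M[R]_(p + q) :=
  block_mx (1%:M + Y *m Ct) Y (Ct + Ct *m Y *m Ct) (1%:M + Ct *m Y).

Lemma closed_loop_dl_feedback {H Ct X} : X = Ct + X *m H *m Ct ->
  closed_loop_dl H X *m feedback_mx H Ct = 1%:M.
Proof.
move=> eX; rewrite mulmx_block (scalar_mx_block p q); congr block_mx.
- rewrite mulmx1 mulmxN mulmxDl -!mulmxA -mulmxDr (mulmxA X H Ct) -eX.
  by rewrite addrK.
- by rewrite mulmx1 mulmxN mulmxDl mul1mx addNr.
- by rewrite mulmxN mulmxDl mul1mx mulmx1 -eX subrr.
- by rewrite mulmxN !mulmx1 addrCA addNr addr0.
Qed.

Lemma feedback_closed_loop_ur {H Ct Y} : Y = H + H *m Ct *m Y ->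
  feedback_mx H Ct *m closed_loop_ur Ct Y = 1%:M.
Proof.
move=> eY; rewrite mulmx_block (scalar_mx_block p q); congr block_mx.
- by rewrite mul1mx mulNmx mulmxDr !mulmxA -mulmxDl -eY addrK.
- by rewrite mul1mx mulNmx mulmxDr mulmx1 mulmxA -eY subrr.
- by rewrite mul1mx mulNmx mulmxDr mulmx1 mulmxA addNr.
- by rewrite mul1mx mulNmx addrCA addNr addr0.
Qed.

Lemma feedback_inverse_fixpoints {H Ct} {B : 'M[R]_(p + q)} :
  feedback_mx H Ct *m B = 1%:M -> B *m feedback_mx H Ct = 1%:M ->
  [/\ dlsubmx B = Ct + Ct *m H *m dlsubmx B,
      dlsubmx B = Ct + dlsubmx B *m H *m Ct &
      ursubmx B = H + ursubmx B *m Ct *m H].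
Proof.
rewrite -{1 2}(submxK B) !mulmx_block (scalar_mx_block p q).
set B11 := ulsubmx B; set B12 := ursubmx B.
set B21 := dlsubmx B; set B22 := drsubmx B.
move=> /eq_block_mx [e11 _ e21 _] /eq_block_mx [f11 f12 f21 f22].
rewrite ?mul1mx ?mulmx1 ?mulNmx ?mulmxN in e11 e21 f11 f12 f21 f22.
have a21 : B21 = Ct *m B11 by apply/eqP; rewrite -subr_eq0 addrC e21.
have a11 : B11 = 1%:M + H *m B21 by apply/eqP; rewrite -subr_eq -e11.
have b12 : B12 = B11 *m H by apply/eqP; rewrite -subr_eq0 addrC f12.
have b11 : B11 = 1%:M + B12 *m Ct by apply/eqP; rewrite -subr_eq -f11.
have b21 : B21 = B22 *m Ct by apply/eqP; rewrite -subr_eq0 f21.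
have b22 : B22 = 1%:M + B21 *m H by apply/eqP; rewrite -subr_eq addrC -f22.
split.
- by rewrite {1}a21 a11 mulmxDr mulmx1 mulmxA.
- by rewrite {1}b21 b22 mulmxDl mul1mx.
- by rewrite {1}b12 b11 mulmxDl mul1mx.
Qed.

End Loop.

Lemma mul_youla_controller {nu ny} {G : 'M[R]_(ny, nu)} {Q K : 'M[R]_(nu, ny)} :
  (1%:M + Q *m G) \in unitmx -> K = invmx (1%:M + Q *m G) *m Q ->
  (1%:M + Q *m G) *m K = Q.
Proof. by move=> uU ->; rewrite mulmxA mulmxV // mul1mx. Qed.

Lemma youla_of_fixpoints {nu ny} {G : 'M[R]_(ny, nu)} {Q K : 'M[R]_(nu, ny)} :
  Q = K + K *m G *m Q -> Q = K + Q *m G *m K ->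
  (1%:M + Q *m G) \in unitmx /\ K = invmx (1%:M + Q *m G) *m Q.
Proof.
move=> eQl eQr.
have inv : (1%:M + Q *m G) *m (1%:M - K *m G) = 1%:M.
  have h : Q *m G - Q *m G *m (K *m G) = K *m G.
    by rewrite {1}eQr mulmxDl !mulmxA addrK.
  by rewrite mulmxDl mul1mx mulmxBr mulmx1 h subrK.
split; first exact: (mulmx1_unit inv).1.
by rewrite (invmx_of_rinv inv) mulmxBl mul1mx {1}eQl addrK.
Qed.

End FeedbackAlgebra.

Section RankOneLoops.
Context {R : comPzRingType}.

Lemma delta_sandwich n k (j : 'I_n) (i : 'I_k) (A : 'M[R]_(k, n)) :
  delta_mx j i *m A *m delta_mx j i = A i j *: delta_mx j i.
Proof.
apply/matrixP => r l; rewrite mxE (bigD1 j) //= big1 ?addr0; last first.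
  by move=> t ht; rewrite [delta_mx j i t l]mxE (negbTE ht) /= mulr0.
rewrite mxE (bigD1 i) //= big1 ?addr0; last first.
  by move=> t ht; rewrite [delta_mx j i r t]mxE (negbTE ht) andbF /= mul0r.
rewrite !mxE !eqxx /= andbT.
by case: (r == j); case: (l == i); rewrite ?mul1r ?mul0r ?mulr0 ?mulr1.
Qed.

Lemma rank_one_loop_entry {n k} {j : 'I_n} {i : 'I_k} {g : R} {T : 'M[R]_(k, n)}
    {X : 'M[R]_(n, k)} :
  X = g *: delta_mx j i + (g *: delta_mx j i) *m T *m X ->
  X j i = g + g * (T i j * X j i).
Proof.
move=> eX.
have rowX : X = delta_mx j i *m (g *: (1%:M + T *m X)).
  by rewrite {1}eX -scalemxAr mulmxDr mulmx1 scalerDr -!scalemxAl mulmxA.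
have loopX : delta_mx j i *m T *m X = T i j *: X.
  by rewrite {1}rowX !mulmxA delta_sandwich -scalemxAl -rowX.
by rewrite {1}eX -!scalemxAl loopX !mxE !eqxx mulr1.
Qed.

Lemma loop_gain_change {x g h w m : R} :
  x = g + g * ((w + m) * x) -> g * (1 + h * w) = h -> x * (1 - h * m) = h.
Proof.
move=> ex hg.
have key : x * (1 - h * m) - h = (x * (1 - g * (w + m)) - g) * (1 + h * w)
   + (g * (1 + h * w) - h) * (x * (w + m) + 1) by ring.
have gx : x * (1 - g * (w + m)) = g.
  by rewrite mulrBr mulr1 {1}ex; ring.
by apply/eqP; rewrite -subr_eq0 key gx hg !subrr !mul0r addr0.
Qed.

End RankOneLoops.

Section StableFunctions.
Context {C : numClosedFieldType}.
Local Notation tf := (tf C).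
Local Notation "x %:F" := (tofrac x).

Lemma real_polyD {p q : {poly C}} : real_poly p -> real_poly q -> real_poly (p + q).
Proof.
move=> /polyOverP rp /polyOverP rq; apply/polyOverP => i.
by rewrite coefD rpredD.
Qed.

Lemma real_polyM {p q : {poly C}} : real_poly p -> real_poly q -> real_poly (p * q).
Proof.
move=> /polyOverP rp /polyOverP rq; apply/polyOverP => i.
by rewrite coefM rpred_sum // => j _; rewrite rpredM.
Qed.

Lemma real_polyC {c : C} : c \is Num.real -> real_poly c%:P.
Proof. by move=> rc; rewrite /real_poly polyOverC. Qed.

Lemma stable_proper (f : tf) : stable_tf f -> proper_real_rational f.
Proof. by case=> p [q [fpq _]]; exists p, q. Qed.

Lemma stable_const (c : C) : c \is Num.real -> stable_tf (c%:P)%:F.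
Proof.
move=> rc; exists c%:P, 1; split; last by move=> z; rewrite /root hornerC oner_eq0.
split; rewrite ?oner_eq0 ?size_poly1 ?size_polyC_leq1 ?tofrac1 ?divr1 //.
- exact: real_polyC.
- by rewrite -polyC1; apply: real_polyC; rewrite rpred1.
Qed.

Lemma stable0 : stable_tf (0 : tf).
Proof. by rewrite -tofrac0 -polyC0; apply: stable_const; rewrite rpred0. Qed.

Lemma stable1 : stable_tf (1 : tf).
Proof. by rewrite -tofrac1 -polyC1; apply: stable_const; rewrite rpred1. Qed.

Lemma stable_nat (b : bool) : stable_tf (b%:R : tf).
Proof. by case: b; [apply: stable1 | apply: stable0]. Qed.

Lemma stableN (f : tf) : stable_tf f -> stable_tf (- f).
Proof.
move=> [p [q [[q0 rp rq sz ->] hq]]].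
exists (- p), q; split => //; split; rewrite ?size_polyN ?tofracN ?mulNr //.
by move: rp => /polyOverP rp; apply/polyOverP => i; rewrite coefN rpredN.
Qed.

(* The poles of a sum or product lie among the poles of the factors. *)
Lemma stableD (f g : tf) : stable_tf f -> stable_tf g -> stable_tf (f + g).
Proof.
move=> [p1 [q1 [[q10 rp1 rq1 sz1 ->] hq1]]] [p2 [q2 [[q20 rp2 rq2 sz2 ->] hq2]]].
exists (p1 * q2 + p2 * q1), (q1 * q2); split; last first.
  by move=> z; rewrite rootM => /orP [/hq1|/hq2].
split.
- by rewrite mulf_neq0.
- by apply: real_polyD; apply: real_polyM.
- exact: real_polyM.
- apply: leq_trans (size_polyD _ _) _; rewrite (size_mul q10 q20) geq_max.
  rewrite !(leq_trans (size_polyMleq _ _)) // -!subn1 leq_sub2r //.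
    by rewrite [X in (_ <= X)%N]addnC leq_add.
  exact: leq_add.
- rewrite (@addf_div _ p1%:F q1%:F p2%:F q2%:F) ?tofrac_eq0 //.
  by rewrite tofracD !tofracM.
Qed.

Lemma stableM (f g : tf) : stable_tf f -> stable_tf g -> stable_tf (f * g).
Proof.
move=> [p1 [q1 [[q10 rp1 rq1 sz1 ->] hq1]]] [p2 [q2 [[q20 rp2 rq2 sz2 ->] hq2]]].
exists (p1 * p2), (q1 * q2); split; last first.
  by move=> z; rewrite rootM => /orP [/hq1|/hq2].
split; rewrite ?mulf_neq0 //; try exact: real_polyM.
- rewrite (leq_trans (size_polyMleq _ _)) // (size_mul q10 q20).
  by rewrite -!subn1 leq_sub2r // leq_add.
- by rewrite mulf_div !tofracM.
Qed.

End StableFunctions.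

Section StableMatrices.
Context {C : numClosedFieldType}.
Local Notation tf := (tf C).

Lemma RHinf0 n k : RHinf (0 : 'M[tf]_(n, k)).
Proof. by move=> i j; rewrite mxE; apply: stable0. Qed.

Lemma RHinf1 n : RHinf (1%:M : 'M[tf]_n).
Proof. by move=> i j; rewrite mxE; apply: stable_nat. Qed.

Lemma RHinfD n k (A B : 'M[tf]_(n, k)) : RHinf A -> RHinf B -> RHinf (A + B).
Proof. by move=> sA sB i j; rewrite mxE; apply: stableD. Qed.

Lemma RHinfN n k (A : 'M[tf]_(n, k)) : RHinf A -> RHinf (- A).
Proof. by move=> sA i j; rewrite mxE; apply: stableN. Qed.

Lemma RHinfM n k l (A : 'M[tf]_(n, k)) (B : 'M[tf]_(k, l)) :
  RHinf A -> RHinf B -> RHinf (A *m B).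
Proof.
move=> sA sB i j; rewrite mxE; apply: (big_ind (@stable_tf C)).
- exact: stable0.
- exact: stableD.
- by move=> r _; apply: stableM.
Qed.

Lemma RHinf_block n1 n2 k1 k2 (A : 'M[tf]_(n1, k1)) (B : 'M[tf]_(n1, k2))
    (D : 'M[tf]_(n2, k1)) (E : 'M[tf]_(n2, k2)) :
  RHinf A -> RHinf B -> RHinf D -> RHinf E -> RHinf (block_mx A B D E).
Proof.
move=> sA sB sD sE i j; rewrite -(splitK i) -(splitK j).
case: (split i) => i'; case: (split j) => j' /=.
- by rewrite block_mxEul.
- by rewrite block_mxEur.
- by rewrite block_mxEdl.
- by rewrite block_mxEdr.
Qed.

Lemma RHinf_ulsubmx n1 n2 k1 k2 (A : 'M[tf]_(n1 + n2, k1 + k2)) :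
  RHinf A -> RHinf (ulsubmx A).
Proof. by move=> sA i j; rewrite !mxE. Qed.

Lemma RHinf_ursubmx n1 n2 k1 k2 (A : 'M[tf]_(n1 + n2, k1 + k2)) :
  RHinf A -> RHinf (ursubmx A).
Proof. by move=> sA i j; rewrite !mxE. Qed.

Lemma RHinf_dlsubmx n1 n2 k1 k2 (A : 'M[tf]_(n1 + n2, k1 + k2)) :
  RHinf A -> RHinf (dlsubmx A).
Proof. by move=> sA i j; rewrite !mxE. Qed.

Lemma RHinf_drsubmx n1 n2 k1 k2 (A : 'M[tf]_(n1 + n2, k1 + k2)) :
  RHinf A -> RHinf (drsubmx A).
Proof. by move=> sA i j; rewrite !mxE. Qed.

Lemma RHinf_delta n k (h : tf) (i : 'I_n) (j : 'I_k) :
  stable_tf h -> RHinf (h *: delta_mx i j).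
Proof. by move=> sh r l; rewrite !mxE; apply: stableM => //; apply: stable_nat. Qed.

End StableMatrices.

Ltac solve_RHinf := repeat first
  [ apply: RHinfD | apply: RHinfM | apply: RHinfN | apply: RHinf_block
  | apply: RHinf1 | apply: RHinf0 | assumption ].

Section InternalStability.
Context {C : numClosedFieldType} {p q : nat}.
Implicit Types (H : 'M[tf C]_(p, q)) (Ct : 'M[tf C]_(q, p)).

Lemma int_stable_of_rinv {H Ct} {B : 'M[tf C]_(p + q)} :
  feedback_mx H Ct *m B = 1%:M -> RHinf B -> int_stable H Ct.
Proof. by move=> e sB; split; [exact: (mulmx1_unit e).1 | rewrite (invmx_of_rinv e)]. Qed.

Lemma int_stable_of_linv {H Ct} {B : 'M[tf C]_(p + q)} :
  B *m feedback_mx H Ct = 1%:M -> RHinf B -> int_stable H Ct.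
Proof. by move=> e sB; split; [exact: (mulmx1_unit e).2 | rewrite (invmx_of_linv e)]. Qed.

Lemma int_stable_fixpoints H Ct : int_stable H Ct ->
  let B := invmx (feedback_mx H Ct) in
  [/\ RHinf B, dlsubmx B = Ct + Ct *m H *m dlsubmx B,
      dlsubmx B = Ct + dlsubmx B *m H *m Ct &
      ursubmx B = H + ursubmx B *m Ct *m H].
Proof.
move=> [uA sB] B.
by have [] := feedback_inverse_fixpoints (mulmxV uA) (mulVmx uA).
Qed.

End InternalStability.

Lemma clear_denominators {F : fieldType} {px qx a b pm qm : F} :
  qx != 0 -> b != 0 -> qm != 0 ->
  px / qx * (1 - a / b * (pm / qm)) = a / b -> px * (b * qm - a * pm) = a * qx * qm.
Proof.
move=> qx0 b0 qm0 e.
have -> : px * (b * qm - a * pm) = px / qx * (1 - a / b * (pm / qm)) * (qx * b * qm).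
  by field; rewrite qx0 b0 qm0.
by rewrite e; field.
Qed.

Lemma closed_loop_gain {F : fieldType} {a b pw qw : F} :
  b != 0 -> qw != 0 -> b * qw + a * pw != 0 ->
  (a * qw) / (b * qw + a * pw) * (1 + a / b * (pw / qw)) = a / b.
Proof. by move=> b0 qw0 d0; field; rewrite b0 qw0 d0. Qed.

Section Lag.
Context {C : numClosedFieldType}.
Local Notation tf := (tf C).
Local Notation "x %:F" := (tofrac x).

Lemma stable_denominator_nonroot {q : {poly C}} {s : C} :
  (forall z, root q z -> 'Re z < 0) -> 0 <= s -> ~~ root q s.
Proof.
move=> hq s_ge0; apply/negP => /hq.
rewrite (elimT (Creal_ReP _) (ger0_real s_ge0)) => s_lt0.
by have := lt_le_trans s_lt0 s_ge0; rewrite ltxx.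
Qed.

(* A nonzero polynomial does not vanish at one of the positive integers
   1, ..., size p. *)
Lemma exists_positive_nonroot {p : {poly C}} : p != 0 ->
  exists2 s : C, 0 < s & ~~ root p s.
Proof.
move=> p0; pose pts := [seq (k.+1)%:R | k <- iota 0 (size p)] : seq C.
have uniq_pts : uniq pts.
  by rewrite map_inj_uniq ?iota_uniq // => a b /eqP; rewrite eqr_nat eqSS => /eqP.
have : ~~ all (root p) pts.
  apply/negP => all_roots; have := max_poly_roots p0 all_roots uniq_pts.
  by rewrite size_map size_iota ltnn.
by case/allPn => _ /mapP [k _ ->] hk; exists k.+1%:R; rewrite ?ltr0Sn.
Qed.

Definition lag_den : {poly C} := 'X + 1%:P.

Definition lag (c : C) : tf := (c%:P)%:F / lag_den%:F.

Lemma size_lag_den : size lag_den = 2.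
Proof. exact: size_XaddC. Qed.

Lemma lag_den_neq0 : lag_den != 0.
Proof. by rewrite -size_poly_gt0 size_lag_den. Qed.

Lemma real_lag_den : real_poly lag_den.
Proof.
apply/polyOverP => i; rewrite coefD coefX coefC.
by apply: rpredD; [exact: realn | case: eqP => _; [exact: rpred1 | exact: rpred0]].
Qed.

Lemma stable_lag {c : C} : c \is Num.real -> stable_tf (lag c).
Proof.
move=> rc; exists c%:P, lag_den; split; last first.
  move=> z; rewrite /root hornerD hornerX hornerC addr_eq0 => /eqP ->.
  have m1r : (-1 : C) \is Num.real by rewrite rpredN rpred1.
  by rewrite (elimT (Creal_ReP _) m1r) ltrN10.
split => //; first exact: lag_den_neq0.
- exact: real_polyC.
- exact: real_lag_den.
- by rewrite size_lag_den (leq_trans (size_polyC_leq1 c)).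
Qed.

Lemma lag_environment {c : C} {w : tf} : c \is Num.real -> stable_tf w ->
  exists2 g : tf, proper_real_rational g & g * (1 + lag c * w) = lag c.
Proof.
move=> rc [pw [qw [[qw0 rpw rqw szw ->] _]]].
have size_pw : (size (c%:P * pw)%R <= size qw)%N.
  by rewrite mul_polyC (leq_trans (size_scale_leq _ _)).
have size_qw : size (lag_den * qw) = (size qw).+1.
  by rewrite size_mul ?lag_den_neq0 // size_lag_den.
pose d := lag_den * qw + c%:P * pw.
have size_d : size d = (size qw).+1.
  by rewrite /d size_polyDl size_qw // ltnS.
have d0 : d != 0 by rewrite -size_poly_gt0 size_d.
exists ((c%:P * qw)%:F / d%:F).
  exists (c%:P * qw), d; split => //.
  - exact: real_polyM (real_polyC rc) rqw.
  - exact: real_polyD (real_polyM real_lag_den rqw) (real_polyM (real_polyC rc) rpw).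
  - by rewrite size_d mul_polyC (leq_trans (size_scale_leq _ _)).
have den0 : lag_den%:F != 0 :> tf by rewrite tofrac_eq0 lag_den_neq0.
have qw0F : qw%:F != 0 :> tf by rewrite tofrac_eq0.
have d0F : lag_den%:F * qw%:F + (c%:P)%:F * pw%:F != 0 :> tf.
  by rewrite -!tofracM -tofracD tofrac_eq0.
rewrite /lag /d tofracD !tofracM.
exact: (closed_loop_gain den0 qw0F d0F).
Qed.

(* For a stable nonzero m, some real gain c makes 1 - h m vanish at a positive
   real point s, so that h / (1 - h m) has a pole at s and is not stable. *)
Lemma lag_resonance {m : tf} : stable_tf m -> m != 0 ->
  exists2 c : C, c \is Num.real &
    forall x : tf, stable_tf x -> x * (1 - lag c * m) != lag c.
Proof.
move=> [pm [qm [[qm0 rpm rqm _ em] hqm]]] m0.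
have pm0 : pm != 0 by apply: contraNneq m0 => pm0; rewrite em pm0 tofrac0 mul0r.
have [s s_gt0 pms] := exists_positive_nonroot pm0.
have qms := stable_denominator_nonroot hqm (ltW s_gt0).
have sr : s \is Num.real := gtr0_real s_gt0.
pose c := (s + 1) * qm.[s] / pm.[s].
have c0 : c != 0 by rewrite !mulf_neq0 ?invr_eq0 // lt0r_neq0 // ltr_wpDr.
have c_resonant : c * pm.[s] = (s + 1) * qm.[s] by rewrite divfK.
exists c; first by rewrite !rpredM ?rpredV ?rpredD ?rpred1 ?rpred_horner.
move=> x [px [qx [[qx0 _ _ _ ex] hqx]]]; apply/eqP => hx.
have qxs := stable_denominator_nonroot hqx (ltW s_gt0).
have qxF : qx%:F != 0 :> tf by rewrite tofrac_eq0.
have qmF : qm%:F != 0 :> tf by rewrite tofrac_eq0.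
have denF : lag_den%:F != 0 :> tf by rewrite tofrac_eq0 lag_den_neq0.
move: hx; rewrite ex em /lag => /(clear_denominators qxF denF qmF).
rewrite -!tofracM -tofracB -tofracM => /eqP; rewrite tofrac_eq => /eqP.
move/(congr1 (horner^~ s)); rewrite /= /lag_den !hornerE c_resonant subrr mulr0.
by move/esym/eqP; apply/negP; exact: mulf_neq0 (mulf_neq0 c0 qxs) qms.
Qed.
End Lag.

Section Retrofit.
Context {C : numClosedFieldType} {nv nu nw ny : nat}.
Context {Gwv : 'M[tf C]_(nw, nv)} {Gwu : 'M[tf C]_(nw, nu)}
        {Gyv : 'M[tf C]_(ny, nv)} {Gyu : 'M[tf C]_(ny, nu)}.
Hypotheses (HGwv : RHinf Gwv) (HGwu : RHinf Gwu)
           (HGyv : RHinf Gyv) (HGyu : RHinf Gyu).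

Local Notation G := (block_mx Gwv Gwu Gyv Gyu).
Local Notation U Q := (1%:M + Q *m Gyu).

(* With the trivial environment the whole system reduces to F(Gyu, K); its
   closed-loop parameter is the Youla parameter of K. *)
Lemma youla_of_zero_environment {K : 'M[tf C]_(nu, ny)} :
  int_stable G (block_mx 0 0 0 K) ->
  exists Q, [/\ RHinf Q, U Q \in unitmx & K = invmx (U Q) *m Q].
Proof.
move=> /int_stable_fixpoints [sB eP eP' _].
set P := dlsubmx _ in eP eP'.
have sQ : RHinf (drsubmx P) by apply/RHinf_drsubmx/RHinf_dlsubmx.
move: eP eP'; rewrite -(submxK P) !mulmx_block !add_block_mx.
move=> /eq_block_mx [_ e12 _ e22] /eq_block_mx [_ _ f21 f22].
rewrite ?(mul0mx, mulmx0, addr0, add0r) in e12 e22 f21 f22.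
rewrite e12 f21 ?mulmx0 ?mul0mx ?addr0 ?add0r in e22 f22.
by have [uU eK] := youla_of_fixpoints e22 f22; exists (drsubmx P).
Qed.

(* Once the controller loop is closed, the environment only sees the
   interaction channel Gwv + Gwu Q Gyv. *)
Lemma environment_loop {Gbar : 'M[tf C]_(nv, nw)} {K Q : 'M[tf C]_(nu, ny)} :
  U Q \in unitmx -> K = invmx (U Q) *m Q ->
  int_stable G (block_mx Gbar 0 0 K) ->
  exists2 X, RHinf X & X = Gbar + Gbar *m (Gwv + Gwu *m Q *m Gyv) *m X.
Proof.
move=> uU eK /int_stable_fixpoints [sB eP _ _].
set P := dlsubmx _ in eP.
move: eP; rewrite -(submxK P) !mulmx_block !add_block_mx.
move=> /eq_block_mx [g11 _ g21 _].
rewrite ?(mul0mx, mulmx0, addr0, add0r) in g11 g21.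
set X11 := ulsubmx P in g11 g21; set X21 := dlsubmx P in g11 g21.
have UK := mul_youla_controller uU eK.
have inv : U Q *m (1%:M - K *m Gyu) = 1%:M.
  by rewrite mulmxBr mulmx1 mulmxA UK addrK.
have eX21 : X21 = Q *m Gyv *m X11.
  have hV : (1%:M - K *m Gyu) *m X21 = K *m Gyv *m X11.
    by rewrite mulmxBl mul1mx {1}g21 addrK.
  by rewrite -[LHS]mul1mx -inv -[LHS]mulmxA hV !mulmxA UK.
exists X11; first by apply/RHinf_ulsubmx/RHinf_dlsubmx.
by rewrite {1}g11 eX21 mulmxDr mulmxDl !mulmxA.
Qed.

(* The rank-one environment g e_(j,i) with g (1 + h Gwv(i,j)) = h is
   admissible, with upper-right loop parameter h e_(j,i). *)
Lemma rank_one_environment {i : 'I_nw} {j : 'I_nv} {g h : tf C} :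
  stable_tf h -> g * (1 + h * Gwv i j) = h -> int_stable (g *: delta_mx j i) Gwv.
Proof.
move=> sh hg.
have sY : RHinf (h *: delta_mx j i) by exact: RHinf_delta.
have eY : h *: delta_mx j i =
          g *: delta_mx j i + g *: delta_mx j i *m Gwv *m (h *: delta_mx j i).
  rewrite -scalemxAl -scalemxAr -scalemxAl scalerA delta_sandwich scalerA.
  by rewrite -scalerDl -{1}hg mulrDr mulr1 mulrA (mulrC g h).
apply: int_stable_of_rinv (feedback_closed_loop_ur eY) _.
rewrite /closed_loop_ur; solve_RHinf.
Qed.

(* Sufficiency: from the parameter Qb = Gbar (I - Gwv Gbar)^-1 of an admissible
   environment and the Youla parameter Q, the closed-loop parameter of the
   whole system is explicit; G_wu Q G_yv = 0 makes it a fixpoint. *)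
Lemma retrofit_of_youla {K Q : 'M[tf C]_(nu, ny)} :
  RHinf Q -> U Q \in unitmx -> K = invmx (U Q) *m Q -> Gwu *m Q *m Gyv = 0 ->
  retrofit Gwv Gwu Gyv Gyu K.
Proof.
move=> sQ uU eK hM Gbar _ /int_stable_fixpoints [sB _ _ eQb].
set Qb := ursubmx _ in eQb.
have sQb : RHinf Qb by exact: RHinf_ursubmx.
have eQ : Q = K + Q *m Gyu *m K.
  by rewrite -{1}(mul_youla_controller uU eK) mulmxDl mul1mx.
have M0 k (A : 'M[tf C]_(k, nw)) : A *m Gwu *m Q *m Gyv = 0.
  by rewrite -!mulmxA (mulmxA Gwu) hM mulmx0.
pose X := block_mx Qb (Qb *m Gwu *m Q) (Q *m Gyv *m Qb)
                   (Q + Q *m Gyv *m Qb *m Gwu *m Q).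
have eX : X = block_mx Gbar 0 0 K + X *m G *m block_mx Gbar 0 0 K.
  rewrite /X !mulmx_block add_block_mx; congr block_mx.
  all: rewrite ?mulmx0 ?addr0 ?add0r.
  - by rewrite mulmxDl M0 mul0mx addr0.
  - by rewrite {1}eQ mulmxDr mulmxDl !mulmxA.
  - by rewrite {1}eQb mulmxDr (mulmxDl Q) M0 addr0 mulmxDl !mulmxA addrC.
  - set A := Q *m Gyv *m Qb *m Gwu.
    have eAQ : A *m Q = A *m K + A *m Q *m Gyu *m K.
      by rewrite {1}eQ mulmxDr !mulmxA.
    rewrite [in LHS]eAQ {1}eQ !mulmxDl ?mulmxA -!addrA.
    by congr (_ + _); apply: addrCA.
apply: int_stable_of_linv (closed_loop_dl_feedback eX) _.
rewrite /closed_loop_dl /X; solve_RHinf.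
Qed.

Lemma youla_of_retrofit {K : 'M[tf C]_(nu, ny)} : retrofit Gwv Gwu Gyv Gyu K ->
  exists Q, [/\ RHinf Q, U Q \in unitmx & K = invmx (U Q) *m Q].
Proof.
move=> hR; apply: youla_of_zero_environment; apply: hR.
  by move=> i j; rewrite mxE; apply/stable_proper/stable0.
have e0 : (0 : 'M[tf C]_(nv, nw)) = 0 + 0 *m Gwv *m 0 by rewrite !mulmx0 addr0.
apply: int_stable_of_rinv (feedback_closed_loop_ur e0) _.
rewrite /closed_loop_ur; solve_RHinf.
Qed.

(* Necessity of G_wu Q G_yv = 0: a nonzero entry m would let the rank-one
   environment built from the resonant lag destabilise the whole system. *)
Lemma retrofit_interaction_zero {K Q : 'M[tf C]_(nu, ny)} :
  retrofit Gwv Gwu Gyv Gyu K -> RHinf Q -> U Q \in unitmx ->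
  K = invmx (U Q) *m Q -> Gwu *m Q *m Gyv = 0.
Proof.
move=> hR sQ uU eK; apply/matrixP => i j; rewrite [RHS]mxE.
have [//|m0] := eqVneq ((Gwu *m Q *m Gyv) i j) 0; exfalso.
have sM : RHinf (Gwu *m Q *m Gyv) by solve_RHinf.
have [c rc resonant] := lag_resonance (sM i j) m0.
have [g pg hg] := lag_environment rc (HGwv i j).
have prGbar : prr_mx (g *: delta_mx j i).
  move=> k l; rewrite !mxE; case: (_ && _); rewrite ?mulr1 ?mulr0 //.
  exact/stable_proper/stable0.
have preGbar := rank_one_environment (stable_lag rc) hg.
have [X sX eX] := environment_loop uU eK (hR _ prGbar preGbar).
have := rank_one_loop_entry eX; rewrite mxE => ex.
by have := resonant _ (sX j i); rewrite (loop_gain_change ex hg) eqxx.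
Qed.

End Retrofit.

Theorem theorem1 (C : numClosedFieldType) (nv nd nu nw nz ny : nat)
  (Gwv : 'M[tf C]_(nw, nv)) (Gwd : 'M[tf C]_(nw, nd)) (Gwu : 'M[tf C]_(nw, nu))
  (Gzv : 'M[tf C]_(nz, nv)) (Gzd : 'M[tf C]_(nz, nd)) (Gzu : 'M[tf C]_(nz, nu))
  (Gyv : 'M[tf C]_(ny, nv)) (Gyd : 'M[tf C]_(ny, nd)) (Gyu : 'M[tf C]_(ny, nu))
  (HGwv : RHinf Gwv) (HGwd : RHinf Gwd) (HGwu : RHinf Gwu)
  (HGzv : RHinf Gzv) (HGzd : RHinf Gzd) (HGzu : RHinf Gzu)
  (HGyv : RHinf Gyv) (HGyd : RHinf Gyd) (HGyu : RHinf Gyu)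
  (K : 'M[tf C]_(nu, ny)) (HK : prr_mx K) :
  retrofit Gwv Gwu Gyv Gyu K <->
  exists Q : 'M[tf C]_(nu, ny),
    [/\ RHinf Q,
        (1%:M + Q *m Gyu) \in unitmx,
        K = invmx (1%:M + Q *m Gyu) *m Q
      & Gwu *m Q *m Gyv = 0].
Proof.
split => [hR | [Q [sQ uU eK hM]]].
- have [Q [sQ uU eK]] := youla_of_retrofit HGwv hR.
  exists Q; split => //.
  exact: (retrofit_interaction_zero HGwv HGwu HGyv hR sQ uU eK).
- exact: (retrofit_of_youla HGwv HGwu HGyv HGyu sQ uU eK hM).
Qed.
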